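(* Let $G$ be a group acting linearly and isometrically on a real Hilbert space $M$, let $t_0\in M\setminus\{0\}$ and let $\epsilon$ be a random variable with $\mathbb{E}(\epsilon)=0$ and $\mathbb{E}\|\epsilon\|<\infty$. Then $\mathrm{Fix}(M)$ is a closed linear subspace of $M$ and $$\frac{1}{\|t_0\|}\mathbb{E}\Big(\sup_{g\in G}\langle g\cdot\epsilon,t_0\rangle\Big)\le \mathrm{dist}\big(t_0/\|t_0\|,\mathrm{Fix}(M)\big)\,\mathbb{E}(\|\epsilon\|).$$
   Context: $M$ is a real Hilbert space with inner product $\langle\cdot,\cdot\rangle$ and norm $\|\cdot\|$; the action is linear and isometric ($\|g\cdot x\|=\|x\|$). $\mathrm{Fix}(M)=\{x\in M: g\cdot x=x \text{ for all } g\in G\}$ is the set of fixed points, and $\mathrm{dist}(x,A)=\inf_{a\in A}\|x-a\|$. *)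

From HB Require Import structures.
From mathcomp Require Import all_boot all_order all_algebra.
From mathcomp Require Import all_classical all_reals all_analysis measurable_realfun.
Set Implicit Arguments. Unset Strict Implicit. Unset Printing Implicit Defensive.
Import Order.TTheory GRing.Theory Num.Theory.
Import numFieldNormedType.Exports.
Local Open Scope classical_set_scope.
Local Open Scope ring_scope.

Definition is_group (G : Type) (mul : G -> G -> G) (one : G) (inv : G -> G) :=
  [/\ forall a b c, mul a (mul b c) = mul (mul a b) c,
      forall a, mul one a = a,
      forall a, mul a one = a,
      forall a, mul (inv a) a = one &
      forall a, mul a (inv a) = one].

Definition is_inner_product (R : realType) (M : normedModType R)
    (ip : M -> M -> R) :=
  [/\ forall x y, ip x y = ip y x,
      forall a x y z, ip (a *: x + y) z = a * ip x z + ip y z &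
      forall x, ip x x = `|x| ^+ 2].

Definition is_lin_isom_action (R : realType) (M : normedModType R)
    (G : Type) (mul : G -> G -> G) (one : G) (act : G -> M -> M) :=
  [/\ forall x, act one x = x,
      forall g h x, act (mul g h) x = act g (act h x),
      forall g a x y, act g (a *: x + y) = a *: act g x + act g y &
      forall g x, `|act g x| = `|x|].

Definition Fix (R : realType) (M : normedModType R) (G : Type)
    (act : G -> M -> M) : set M := [set x | forall g, act g x = x].

Definition closed_linear_subspace (R : realType) (M : normedModType R)
    (S : set M) :=
  [/\ closed S, S 0, forall x y, S x -> S y -> S (x + y) &
      forall (a : R) x, S x -> S (a *: x)].

Definition dist (R : realType) (M : normedModType R) (x : M) (A : set M) : R :=
  inf [set `|x - a| | a in A].

(* Mean zero of an M-valued random variable eps, expressed weakly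
   (no Bochner integral in the library): for every v in M, the real random
   variable <eps, v> is integrable and has expectation 0. *)
Definition mean_zero (R : realType) (d : measure_display) (Omega : measurableType d)
    (P : probability Omega R) (M : normedModType R) (ip : M -> M -> R)
    (eps : Omega -> M) :=
  forall v : M, P.-integrable setT (fun w => (ip (eps w) v)%:E) /\
    (\int[P]_w (ip (eps w) v)%:E = 0)%E.

(** For an invariant vector [b], the isometry of the action and Cauchy-Schwarz give
    [<g.e, t> = <g.e, t - b> + <e, b> <= ||e|| ||t - b|| + <e, b>] for every [g].
    Taking the supremum over [g] and then the expectation, the centred term
    [E <e, b>] vanishes, so [E sup_g <g.e, t> <= ||t - b|| E ||e||]; rescaling
    [b = ||t|| a] and optimizing over [a] in [Fix] gives the distance. *)
From HB Require Import structures.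
From mathcomp Require Import all_boot all_order all_algebra.
From mathcomp Require Import all_classical all_reals all_analysis measurable_realfun.
From mathcomp Require Import ring lra.
Set Implicit Arguments. Unset Strict Implicit. Unset Printing Implicit Defensive.
Import Order.TTheory GRing.Theory Num.Theory.
Import numFieldNormedType.Exports.
Local Open Scope classical_set_scope.
Local Open Scope ring_scope.

Lemma ler_inf_mulr (R : realType) (T : Type) (A : set T) (f : T -> R) (x i : R) :
  A !=set0 -> 0 <= i -> (forall a, A a -> x <= f a * i) ->
  x <= inf (f @` A) * i.
Proof.
move=> [a0 Aa0] i_ge0 xle.
have [i0 | i_neq0] := eqVneq i 0.
  by have := xle a0 Aa0; rewrite i0 !mulr0.
have i_gt0 : 0 < i by rewrite lt_def i_neq0.
rewrite -ler_pdivrMr //; apply: lb_le_inf; first by exists (f a0), a0.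
by move=> _ [a Aa <-]; rewrite ler_pdivrMr //; exact: xle.
Qed.

Section InnerProduct.
Variables (R : realType) (M : normedModType R) (ip : M -> M -> R).
Hypothesis ip_inner : is_inner_product ip.

Lemma ip0l z : ip 0 z = 0.
Proof.
case: ip_inner => _ ipDl _; have := ipDl 1 0 0 z.
rewrite scale1r addr0 mul1r => h; lra.
Qed.

Lemma ip0r z : ip z 0 = 0.
Proof. by case: ip_inner => ipC _ _; rewrite ipC ip0l. Qed.

Lemma ipDr x y z : ip x (y + z) = ip x y + ip x z.
Proof.
case: ip_inner => ipC ipDl _; have := ipDl 1 y z x; rewrite scale1r mul1r => h.
by rewrite ipC h (ipC y) (ipC z).
Qed.

Lemma ipNl x z : ip (- x) z = - ip x z.
Proof.
case: ip_inner => _ ipDl _; have := ipDl (-1) x 0 z.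
by rewrite addr0 ip0l addr0 scaleN1r mulN1r.
Qed.

Lemma ip_polar x y : ip x y = (`|x + y| ^+ 2 - `|x| ^+ 2 - `|y| ^+ 2) / 2.
Proof.
case: ip_inner => ipC ipDl ipxx.
have h := ipDl 1 x y (x + y); rewrite scale1r mul1r in h.
by rewrite -!ipxx h !ipDr (ipC y x); field.
Qed.

Lemma ip_le_norm x y : ip x y <= `|x| * `|y|.
Proof.
rewrite ip_polar.
have := ler_normD x y; have := normr_ge0 (x + y).
have := normr_ge0 x; have := normr_ge0 y; nra.
Qed.

Lemma normr_ip_le x y : `|ip x y| <= `|x| * `|y|.
Proof.
rewrite ler_norml ip_le_norm andbT lerNl -ipNl -(normrN x).
exact: ip_le_norm.
Qed.

Lemma ip_additive_isometry (f : M -> M) :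
  {morph f : x y / x + y} -> (forall x, `|f x| = `|x|) ->
  forall x y, ip (f x) (f y) = ip x y.
Proof. by move=> fD fN x y; rewrite !ip_polar -fD !fN. Qed.

End InnerProduct.

Section Action.
Variables (R : realType) (M : normedModType R) (G : Type) (mul : G -> G -> G)
  (one : G) (act : G -> M -> M).
Hypothesis act_lin_isom : is_lin_isom_action mul one act.

Lemma act1 x : act one x = x.
Proof. by case: act_lin_isom. Qed.

Lemma actD g : {morph act g : x y / x + y}.
Proof. by case: act_lin_isom => _ _ actL _ x y; have := actL g 1 x y; rewrite !scale1r. Qed.

Lemma act0 g : act g 0 = 0.
Proof. by apply/(addrI (act g 0)); rewrite -actD !addr0. Qed.

Lemma actZ g a x : act g (a *: x) = a *: act g x.
Proof.
by case: act_lin_isom => _ _ actL _; have := actL g a x 0; rewrite !addr0 act0 addr0.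
Qed.

Lemma actB g x y : act g (x - y) = act g x - act g y.
Proof. by rewrite actD -scaleN1r actZ scaleN1r. Qed.

Lemma normr_act g x : `|act g x| = `|x|.
Proof. by case: act_lin_isom. Qed.

Lemma act_continuous g : continuous (act g).
Proof.
move=> x; apply/cvgrPdist_lt => e e_gt0.
apply: filterS ((cvgrPdist_lt _ _).1 (@cvg_id _ (nbhs x)) e e_gt0) => y.
by rewrite -actB normr_act.
Qed.

Lemma Fix_closed_linear_subspace : closed_linear_subspace (Fix act).
Proof.
split.
- have -> : Fix act = \bigcap_(g in setT) ((fun x => act g x - x) @^-1` [set 0]).
    apply/seteqP; split => x /= fixx.
      by move=> g _ /=; rewrite fixx subrr.
    by move=> g; apply/eqP; rewrite -subr_eq0; apply/eqP/fixx.
  apply: closed_bigI => g _; apply: preimage_closed.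
    by move=> x _; apply: continuousB; [exact: act_continuous | exact: cvg_id].
  exact/accessible_closed_set1/hausdorff_accessible/norm_hausdorff.
- by move=> g; rewrite act0.
- by move=> x y fixx fixy g; rewrite actD fixx fixy.
- by move=> a x fixx g; rewrite actZ fixx.
Qed.

End Action.

Section OrbitSupremum.
Variables (R : realType) (M : normedModType R) (ip : M -> M -> R).
Variables (G : Type) (mul : G -> G -> G) (one : G) (act : G -> M -> M).
Hypothesis ip_inner : is_inner_product ip.
Hypothesis act_lin_isom : is_lin_isom_action mul one act.

Definition sup_orbit_ip (x t : M) : \bar R :=
  ereal_sup [set (ip (act g x) t)%:E | g in [set: G]].

Lemma ip_act_Fix g x b : Fix act b -> ip (act g x) b = ip x b.
Proof.
move=> fixb; rewrite -{1}(fixb g).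
exact: (ip_additive_isometry ip_inner (actD act_lin_isom g) (normr_act act_lin_isom g)).
Qed.

Lemma sup_orbit_ip_le_Fix x t b : Fix act b ->
  (sup_orbit_ip x t <= (`|x| * `|t - b| + ip x b)%:E)%E.
Proof.
move=> fixb; apply: ge_ereal_sup => _ [g _ <-]; rewrite lee_fin.
rewrite -[t in ip _ t](subrK b) ipDr // [ip _ b]ip_act_Fix // lerD2r.
by rewrite -(normr_act act_lin_isom g); exact: ip_le_norm.
Qed.

Lemma ip_le_sup_orbit x t : ((ip x t)%:E <= sup_orbit_ip x t)%E.
Proof. by apply: ereal_sup_ubound; exists one => //; rewrite (act1 act_lin_isom). Qed.

Lemma sup_orbit_ip_bounded x t :
  exists2 r : R, sup_orbit_ip x t = r%:E & `|r| <= `|x| * `|t|.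
Proof.
have := sup_orbit_ip_le_Fix x t (act0 act_lin_isom).
rewrite subr0 ip0r // addr0.
have := ip_le_sup_orbit x t; have := normr_ip_le ip_inner x t.
case: (sup_orbit_ip x t) => [r | | ] + lower upper //=.
move=> ip_le; exists r => //; rewrite !lee_fin in lower upper.
by rewrite ler_norml upper andbT; move: ip_le; rewrite ler_norml => /andP[+ _]; lra.
Qed.

Variables (d : measure_display) (Omega : measurableType d).
Variables (P : probability Omega R) (eps : Omega -> M) (t : M).
Hypothesis eps_mean_zero : mean_zero P ip eps.
Hypothesis norm_eps_integrable : P.-integrable setT (fun w => (`|eps w|)%:E).
Hypothesis sup_orbit_measurable :
  measurable_fun setT (fun w => sup_orbit_ip (eps w) t).

Lemma sup_orbit_integrable : P.-integrable setT (fun w => sup_orbit_ip (eps w) t).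
Proof.
apply: (le_integrable measurableT sup_orbit_measurable
  (g := fun w => ((`|t|)%:E * (`|eps w|)%:E)%E)); last exact: integrableZl.
move=> w _; have [r -> r_le] := sup_orbit_ip_bounded (eps w) t.
by rewrite -EFinM !abse_EFin lee_fin normrM !normr_id mulrC.
Qed.

Lemma integral_sup_orbit_le_Fix b : Fix act b ->
  (\int[P]_w sup_orbit_ip (eps w) t
     <= (`|t - b|)%:E * \int[P]_w (`|eps w|)%:E)%E.
Proof.
move=> fixb; have [ip_b_integrable ip_b_centred] := eps_mean_zero b.
have scaled_integrable : P.-integrable setT
    (fun w => ((`|t - b|)%:E * (`|eps w|)%:E)%E) by exact: integrableZl.
rewrite -[leRHS]adde0 -ip_b_centred -integralZl // -integralD //.
apply: le_integral => //; first exact: sup_orbit_integrable.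
  exact: integrableD.
by move=> w _; rewrite -EFinM -EFinD mulrC; exact: sup_orbit_ip_le_Fix.
Qed.

Lemma integral_sup_orbit_le_dist : t != 0 ->
  ((`|t|)^-1%:E * \int[P]_w sup_orbit_ip (eps w) t
     <= (dist (`|t|^-1 *: t) (Fix act))%:E * \int[P]_w (`|eps w|)%:E)%E.
Proof.
move=> t_neq0; have t_gt0 : 0 < `|t| by rewrite normr_gt0.
have fin_sup := integrable_fin_num measurableT sup_orbit_integrable.
have fin_eps := integrable_fin_num measurableT norm_eps_integrable.
have eps_ge0 : 0 <= fine (\int[P]_w (`|eps w|)%:E).
  by apply: fine_ge0; apply: integral_ge0 => w _; rewrite lee_fin.
rewrite -(fineK fin_sup) -(fineK fin_eps) -!EFinM lee_fin.
apply: ler_inf_mulr eps_ge0 _; first by exists 0; exact: (act0 act_lin_isom).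
move=> a fixa; rewrite -(ler_pM2l t_gt0) mulrA mulfV ?gt_eqF // mul1r mulrA.
have fixb : Fix act (`|t| *: a) by move=> g; rewrite (actZ act_lin_isom) fixa.
have <- : `|t - `|t| *: a| = `|t| * `|(`|t|^-1 *: t) - a|.
  by rewrite -[X in _ = X * _]normr_id -normrZ scalerBr scalerA mulfV ?gt_eqF // scale1r.
have := integral_sup_orbit_le_Fix fixb.
by rewrite -(fineK fin_sup) -(fineK fin_eps) -EFinM lee_fin.
Qed.

End OrbitSupremum.

Theorem mainTheorem14
  (R : realType) (M : completeNormedModType R) (ip : M -> M -> R)
  (G : Type) (mul : G -> G -> G) (one : G) (inv : G -> G) (act : G -> M -> M)
  (d : measure_display) (Omega : measurableType d) (P : probability Omega R)
  (eps : Omega -> M) (t0 : M) :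
  is_inner_product ip ->
  is_group mul one inv ->
  is_lin_isom_action mul one act ->
  t0 != 0 ->
  mean_zero P ip eps ->
  P.-integrable setT (fun w => (`|eps w|)%:E) ->
  measurable_fun setT
    (fun w => (ereal_sup [set (ip (act g (eps w)) t0)%:E | g in [set: G]] : \bar R)) ->
  closed_linear_subspace (Fix act) /\
  ((`|t0|)^-1%:E *
     \int[P]_w ereal_sup [set (ip (act g (eps w)) t0)%:E | g in [set: G]]
   <= (dist (`|t0|^-1 *: t0) (Fix act))%:E * \int[P]_w (`|eps w|)%:E)%E.
Proof.
move=> ip_inner _ act_lin_isom t0_neq0 eps_mean_zero norm_eps_integrable sup_measurable.
split; first exact: Fix_closed_linear_subspace act_lin_isom.
exact: (integral_sup_orbit_le_dist ip_inner act_lin_isom eps_mean_zero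
  norm_eps_integrable sup_measurable t0_neq0).
Qed.
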